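(* Let $\mathcal{G}=(V,E)$ be a connected hypergraph on $n$ vertices with at least one pair of nonadjacent vertices, and let $\lambda=\frac{2\lambda_2(L_{\mathcal{G}})}{\lambda_n(L_{\mathcal{G}})+\lambda_2(L_{\mathcal{G}})}$. Then for any $S\subset V$, $$\frac{|\delta S|}{|S|}\ge(n-|S|)\,\frac{1-(1-\lambda)^2}{(1-\lambda)^2(n-|S|)+|S|}.$$ Moreover, if $|S|\le n/2$, then $$\frac{|\delta S|}{|S|}\ge\frac{2\lambda_n(L_{\mathcal{G}})\lambda_2(L_{\mathcal{G}})}{\lambda_n(L_{\mathcal{G}})^2+\lambda_2(L_{\mathcal{G}})^2}.$$
   Context: A hypergraph $\mathcal{G}=(V,E)$ has a finite vertex set $V$ and a set $E$ of subsets of $V$ (edges), each of cardinality at least $2$. Distinct vertices are adjacent if some edge contains both. The degree $d_i$ is the number of edges containing $i$. The Laplacian $L_{\mathcal{G}}$ has $(L_{\mathcal{G}})_{ii}=d_i$ and $(L_{\mathcal{G}})_{ij}=-\sum_{e\in E,\, i,j\in e}\frac{1}{|e|-1}$ for $i\ne j$, with eigenvalues $\lambda_1(L_{\mathcal{G}})\le\dots\le\lambda_n(L_{\mathcal{G}})$. The vertex boundary $\delta S$ is the set of vertices in $V\setminus S$ adjacent to some vertex of $S$. *)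

From HB Require Import structures.
From mathcomp Require Import all_boot all_order all_algebra.
From mathcomp Require Import reals.

Set Implicit Arguments.
Unset Strict Implicit.
Unset Printing Implicit Defensive.

Import Order.TTheory GRing.Theory Num.Theory.
Local Open Scope ring_scope.

Definition is_hypergraph (n : nat) (E : {set {set 'I_n}}) : Prop :=
  forall e, e \in E -> (2 <= #|e|)%N.

Definition hadj (n : nat) (E : {set {set 'I_n}}) : rel 'I_n :=
  fun i j => (i != j) && [exists e in E, (i \in e) && (j \in e)].

Definition hconnected (n : nat) (E : {set {set 'I_n}}) : Prop :=
  forall i j : 'I_n, connect (hadj E) i j.

Definition hdeg (n : nat) (E : {set {set 'I_n}}) (i : 'I_n) : nat :=
  #|[set e in E | i \in e]|.

Definition hlaplacian (R : realType) (n : nat) (E : {set {set 'I_n}})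
  : 'M[R]_n :=
  \matrix_(i, j) if i == j then (hdeg E i)%:R
                 else - \sum_(e in E | (i \in e) && (j \in e)) ((#|e| - 1)%:R)^-1.

Definition vboundary (n : nat) (E : {set {set 'I_n}}) (S : {set 'I_n})
  : {set 'I_n} :=
  [set j | (j \notin S) && [exists i in S, hadj E i j]].

(* s is the list of eigenvalues of A, with multiplicity, in nondecreasing
   order: lambda_1 = s`_0 <= ... <= lambda_n = s`_(n-1). *)
Definition is_spectrum (R : realType) (n : nat) (A : 'M[R]_n) (s : seq R)
  : Prop :=
  sorted <=%R s /\ char_poly A = \prod_(x <- s) ('X - x%:P).

From HB Require Import structures.
From mathcomp Require Import all_boot all_order all_algebra.
From mathcomp Require Import reals.
From mathcomp Require Import ring lra.
Import Order.TTheory GRing.Theory Num.Theory.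
Local Open Scope ring_scope.
Set Implicit Arguments.
Unset Strict Implicit.
Unset Printing Implicit Defensive.

(* Let L be the Laplacian, a = lambda_2, b = lambda_n and M = I - 2/(a+b) L.
   L is symmetric, positive semidefinite and kills the constant vector 1; for a
   connected hypergraph its kernel is exactly the constants, so lambda_1 = 0.
   On the vectors orthogonal to 1, M contracts by mu = (b-a)/(b+a) = 1 - lambda.
   Instead of diagonalising L we use Cayley-Hamilton: such a vector is killed by
   prod_(i >= 2) (L - lambda_i), and peeling off one factor at a time splits it
   into orthogonal eigenvectors, on each of which mu^2 - (1 - 2 lambda_i/(a+b))^2
   >= 0.  Since M vanishes off the adjacency pattern, x M is supported on
   S u dS for the indicator x of S, and Tanner's argument (Cauchy-Schwarz on that
   support against |x M|^2 <= k^2/n + mu^2 (k - k^2/n), k = |S|) gives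
   k^2 <= (k + |dS|) (k^2/n + mu^2 (k - k^2/n)), which rearranges into both
   bounds. *)

Section WeightedCauchySchwarz.
Variables (R : realFieldType) (T : finType) (c f : T -> R).

Lemma weighted_lagrange_identity :
  (\sum_i c i) * (\sum_i c i * f i ^+ 2) - (\sum_i c i * f i) ^+ 2
  = 2^-1 * \sum_i \sum_j c i * c j * (f i - f j) ^+ 2.
Proof.
have -> : \sum_i \sum_j c i * c j * (f i - f j) ^+ 2 =
    \sum_i \sum_j ((c i * f i ^+ 2) * c j + c i * (c j * f j ^+ 2))
    - 2 * \sum_i \sum_j ((c i * f i) * (c j * f j)).
  rewrite mulr_sumr -sumrB; apply: eq_bigr => i _.
  by rewrite mulr_sumr -sumrB; apply: eq_bigr => j _; ring.
rewrite (eq_bigr _ (fun i _ => big_split _ _ _ _ _)) big_split /= -!big_distrlr /=.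
by field.
Qed.

Hypothesis c_ge0 : forall i, 0 <= c i.

Let sqr_diff_ge0 i j : 0 <= c i * c j * (f i - f j) ^+ 2.
Proof. by rewrite mulr_ge0 ?sqr_ge0 ?mulr_ge0. Qed.

Lemma weighted_cauchy_schwarz :
  (\sum_i c i * f i) ^+ 2 <= (\sum_i c i) * (\sum_i c i * f i ^+ 2).
Proof.
rewrite -subr_ge0 weighted_lagrange_identity mulr_ge0 ?invr_ge0 ?ler0n //.
by do 2!apply: sumr_ge0 => ? _.
Qed.

Lemma weighted_cauchy_schwarz_eq :
  (\sum_i c i * f i) ^+ 2 = (\sum_i c i) * (\sum_i c i * f i ^+ 2) ->
  forall i j, 0 < c i -> 0 < c j -> f i = f j.
Proof.
move/eqP; rewrite eq_sym -subr_eq0 weighted_lagrange_identity mulf_eq0.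
rewrite invr_eq0 pnatr_eq0 /= => /eqP sum0 i j ci cj.
have row_ge0 i' : true -> 0 <= \sum_j c i' * c j * (f i' - f j) ^+ 2.
  by move=> _; apply: sumr_ge0.
have row_i0 := psumr_eq0P row_ge0 sum0 (i := i) isT.
have := psumr_eq0P (fun j _ => sqr_diff_ge0 i j) row_i0 (i := j) isT.
by move/eqP; rewrite !mulf_eq0 (gt_eqF ci) (gt_eqF cj) /= orbb subr_eq0 => /eqP.
Qed.

End WeightedCauchySchwarz.

Section Indicators.
Variables (R : realFieldType) (n : nat).

Definition ind (i : 'I_n) (e : {set 'I_n}) : R := (i \in e)%:R.

Lemma card_sum_ind (e : {set 'I_n}) : #|e|%:R = \sum_i ind i e.
Proof.
rewrite -sum1_card natr_sum big_mkcond /=.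
by apply: eq_bigr => i _; rewrite /ind; case: (i \in e).
Qed.

Lemma sum_delta (F : 'I_n -> R) j : \sum_i (i == j)%:R * F i = F j.
Proof.
rewrite (bigD1 j) //= eqxx mul1r big1 ?addr0 // => i /negbTE ->.
by rewrite mul0r.
Qed.

End Indicators.
Arguments ind {R n} i e.

Section RowDot.
Variable R : realFieldType.

Lemma mulmx_tr_self_eq0 p q (Z : 'M[R]_(p, q)) : Z *m Z^T = 0 -> Z = 0.
Proof.
move=> ZZt0; apply/matrixP => i j; rewrite mxE.
have /eqP := congr1 (fun M : 'M[R]_p => M i i) ZZt0; rewrite !mxE.
under eq_bigr do rewrite mxE -expr2.
move/eqP/psumr_eq0P => /(_ (fun k _ => sqr_ge0 (Z i k)) j isT)/eqP.
by rewrite sqrf_eq0 => /eqP.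
Qed.

Definition dot m (u v : 'rV[R]_m) := (u *m v^T) 0 0.

Variable m : nat.
Implicit Types (u v w : 'rV[R]_m) (A : 'M[R]_m).

Lemma dotE u v : dot u v = \sum_j u 0 j * v 0 j.
Proof. by rewrite /dot mxE; apply: eq_bigr => j _; rewrite mxE. Qed.

Lemma dotC u v : dot u v = dot v u.
Proof. by rewrite !dotE; apply: eq_bigr => j _; rewrite mulrC. Qed.

Lemma dot0l v : dot 0 v = 0.
Proof. by rewrite /dot mul0mx mxE. Qed.

Lemma dotDl u w v : dot (u + w) v = dot u v + dot w v.
Proof. by rewrite /dot mulmxDl mxE. Qed.

Lemma dotNl u v : dot (- u) v = - dot u v.
Proof. by rewrite /dot mulNmx mxE. Qed.

Lemma dotBl u w v : dot (u - w) v = dot u v - dot w v.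
Proof. by rewrite dotDl dotNl. Qed.

Lemma dotZl a u v : dot (a *: u) v = a * dot u v.
Proof. by rewrite /dot -scalemxAl mxE. Qed.

Lemma dotDr u w v : dot v (u + w) = dot v u + dot v w.
Proof. by rewrite dotC dotDl !(dotC v). Qed.

Lemma dotBr u w v : dot v (u - w) = dot v u - dot v w.
Proof. by rewrite dotC dotBl !(dotC v). Qed.

Lemma dotZr a u v : dot v (a *: u) = a * dot v u.
Proof. by rewrite dotC dotZl dotC. Qed.

Lemma dot_mulmx_sym A u v : A^T = A -> dot (u *m A) v = dot u (v *m A).
Proof. by move=> symA; rewrite /dot trmx_mul symA mulmxA. Qed.

Lemma dot_ge0 u : 0 <= dot u u.
Proof. by rewrite dotE sumr_ge0 // => j _; rewrite -expr2 sqr_ge0. Qed.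

Lemma dot_eq0 u : dot u u = 0 -> u = 0.
Proof.
move=> uu0; apply: mulmx_tr_self_eq0; apply/matrixP => i j.
by rewrite !ord1 [RHS]mxE -uu0.
Qed.

Lemma sqr_dot_const1_le (N : {set 'I_m}) v : (forall j, j \notin N -> v 0 j = 0) ->
  dot v (const_mx 1) ^+ 2 <= #|N|%:R * dot v v.
Proof.
move=> v_supp.
have v_ind j : v 0 j = ind j N * v 0 j.
  by rewrite /ind; case: (boolP (j \in N)) => [_|/v_supp ->]; rewrite ?mul1r ?mulr0.
have -> : dot v (const_mx 1) = \sum_j ind j N * v 0 j.
  by rewrite dotE; apply: eq_bigr => j _; rewrite mxE mulr1 -v_ind.
rewrite card_sum_ind.
apply: le_trans (weighted_cauchy_schwarz _ (fun j => ler0n _ _)) _.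
rewrite ler_wpM2l ?sumr_ge0 // dotE; apply: ler_sum => j _.
by case: (j \in N); rewrite ?mul1r ?mul0r -expr2 ?sqr_ge0.
Qed.

End RowDot.

Section SymmetricAnnihilator.
Variables (R : realFieldType) (m : nat).
Implicit Types (A B G : 'M[R]_m) (y : 'rV[R]_m).

Lemma sym_ker_img_decomp B y : B^T = B ->
  exists y1 w, y1 *m B = 0 /\ y = y1 + w *m B.
Proof.
move=> symB.
have cap0 : (kermx B :&: B)%MS = 0.
  set Z := (kermx B :&: B)%MS.
  have ZB0 : Z *m B = 0 by apply/sub_kermxP; rewrite capmxSl.
  have /submxP [W ZWB] : (Z <= B)%MS by rewrite capmxSr.
  by apply: mulmx_tr_self_eq0; rewrite {2}ZWB trmx_mul symB mulmxA ZB0 mul0mx.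
have full : row_full (kermx B + B)%MS.
  apply/eqP; have := mxrank_sum_cap (kermx B) B.
  by rewrite cap0 mxrank0 addn0 mxrank_ker => ->; rewrite subnK // rank_leq_row.
have /sub_addsmxP [[u1 u2] /= ->] := submx_full y full.
by exists (u1 *m kermx B), u2; rewrite -mulmxA mulmx_ker mulmx0.
Qed.

Lemma eigen_split A r t y : A^T = A ->
  y *m \prod_(x <- r :: t) (A - x%:M) = 0 ->
  exists y1 y2, [/\ y = y1 + y2, y1 *m A = r *: y1,
    y2 *m \prod_(x <- t) (A - x%:M) = 0 & dot y1 y2 = 0].
Proof.
move=> symA; rewrite big_cons -mulmxE.
set B := A - r%:M; set P := \prod_(x <- t) _ => yBP0.
have symB : B^T = B by rewrite linearB /= tr_scalar_mx symA.
have commBP : B *m P = P *m B.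
  apply: commr_prod => x _; rewrite -comm_mxE.
  by apply/comm_mxB/comm_mx_scalar; apply/comm_mx_sym/comm_mxB/comm_mx_scalar.
have [y1 [w [y1B0 def_y]]] := sym_ker_img_decomp y symB.
exists y1, (w *m B); split=> //.
- by move/eqP: y1B0; rewrite mulmxBr mul_mx_scalar subr_eq0 => /eqP.
- set z := w *m B *m P.
  have yB : y *m B = w *m B *m B by rewrite def_y mulmxDl y1B0 add0r.
  have zB0 : z *m B = 0 by rewrite -mulmxA -commBP mulmxA -yB -mulmxA.
  apply: dot_eq0; rewrite {1}/z -!mulmxA commBP mulmxA.
  by rewrite dot_mulmx_sym // zB0 dotC dot0l.
- by rewrite dotC dot_mulmx_sym // y1B0 dotC dot0l.
Qed.

Lemma quad_ge0_of_annihilated A G (g : R -> R) t y :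
  A^T = A -> G^T = G ->
  (forall r (u : 'rV_m), u *m A = r *: u -> u *m G = g r *: u) ->
  {in t, forall r, 0 <= g r} ->
  y *m \prod_(r <- t) (A - r%:M) = 0 -> 0 <= dot (y *m G) y.
Proof.
move=> symA symG eigG; elim: t y => [|r t IHt] y g_ge0.
  by rewrite big_nil mulmx1 => ->; rewrite mul0mx dot0l.
case/(eigen_split symA) => y1 [y2 [-> /eigG y1G y2P0 y1y2]].
rewrite mulmxDl !dotDl !dotDr y1G !dotZl y1y2 mulr0 addr0.
rewrite dot_mulmx_sym // y1G dotZr dotC y1y2 mulr0 add0r.
apply: addr_ge0; first by rewrite mulr_ge0 ?dot_ge0 ?g_ge0 ?mem_head.
by apply: IHt => // x tx; rewrite g_ge0 // in_cons tx orbT.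
Qed.

End SymmetricAnnihilator.

Section HypergraphLaplacian.
Variables (R : realType) (n : nat) (E : {set {set 'I_n}}).
Hypothesis hypE : is_hypergraph E.

Local Notation L := (hlaplacian R E).
Implicit Types (e : {set 'I_n}) (i j : 'I_n) (u : 'rV[R]_n).

Definition hweight e : R := ((#|e| - 1)%:R)^-1.

Lemma hweight_gt0 e : e \in E -> 0 < hweight e.
Proof. by move/hypE => e_ge2; rewrite /hweight invr_gt0 ltr0n subn_gt0. Qed.

Lemma hweightK e : e \in E -> hweight e * (#|e|%:R - 1) = 1.
Proof.
move=> eE; have e_ge2 := hypE eE.
have := natrB R (leq_trans (isT : 1 <= 2)%N e_ge2); rewrite /hweight => <-.
by rewrite mulVf // pnatr_eq0 -lt0n subn_gt0.
Qed.

Lemma hlaplacian_entry i j : L i j =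
  \sum_(e in E) hweight e * ((i == j)%:R * ind i e * #|e|%:R - ind i e * ind j e).
Proof.
rewrite mxE; case: eqP => [<-|/eqP ij].
- rewrite /hdeg -sum1_card natr_sum.
  rewrite (eq_bigl (fun e => (e \in E) && (i \in e))) => [|e]; last by rewrite inE.
  rewrite big_mkcondr /=; apply: eq_bigr => e eE; rewrite /ind.
  case: (i \in e) => /=; last by rewrite !(mul0r, mulr0, subr0).
  by rewrite !mul1r hweightK.
- rewrite big_mkcondr /= -sumrN; apply: eq_bigr => e _.
  rewrite /ind !mul0r sub0r mulrN.
  by case: (i \in e); case: (j \in e); rewrite /= ?mulr1 ?mulr0.
Qed.

Lemma hlaplacian_sym : L^T = L.
Proof.
apply/matrixP => i j; rewrite mxE !hlaplacian_entry; apply: eq_bigr => e _.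
by rewrite eq_sym; case: eqP => [->|_] //=; rewrite !mul0r [ind j e * _]mulrC.
Qed.

Lemma const1_mul_hlaplacian : (const_mx 1 : 'rV[R]_n) *m L = 0.
Proof.
apply/matrixP => k j; rewrite !mxE.
under eq_bigr => i _ do rewrite mxE mul1r hlaplacian_entry.
rewrite exchange_big /=; apply: big1 => e _.
rewrite -mulr_sumr sumrB.
under eq_bigr => i _ do rewrite -mulrA.
by rewrite sum_delta -mulr_suml -card_sum_ind [#|e|%:R * _]mulrC subrr mulr0.
Qed.

Lemma hlaplacian_nonadj i j : i != j -> ~~ hadj E i j -> L i j = 0.
Proof.
move=> ij; rewrite /hadj ij negb_exists => /forallP nadj.
rewrite mxE (negbTE ij) big_pred0 ?oppr0 // => e.
by have := nadj e; case: (e \in E); case: (i \in e); case: (j \in e).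
Qed.

Lemma hlaplacian_quadE u : dot (u *m L) u =
  \sum_(e in E) hweight e * ((\sum_i ind i e) * (\sum_i ind i e * u 0 i ^+ 2)
                             - (\sum_i ind i e * u 0 i) ^+ 2).
Proof.
rewrite dotE.
under eq_bigr => j _ do rewrite mxE mulr_suml.
under eq_bigr => j _ do under eq_bigr => i _ do
  rewrite hlaplacian_entry mulr_sumr mulr_suml.
rewrite exchange_big /=.
under eq_bigr => j _ do rewrite exchange_big /=.
rewrite exchange_big /=; apply: eq_bigr => e _.
rewrite (eq_bigr (fun i => \sum_j
   (hweight e * ((j == i)%:R * (ind j e * #|e|%:R * u 0 j * u 0 j))
   - hweight e * ((ind i e * u 0 i) * (ind j e * u 0 j))))); last first.
  move=> i _; apply: eq_bigr => j _; rewrite eq_sym.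
  by case: eqP => [->|_]; rewrite /=; ring.
under eq_bigr => i _ do
  rewrite sumrB -mulr_sumr sum_delta -mulr_sumr -big_distrr /=.
rewrite sumrB -!mulr_sumr -mulrBr -big_distrl /= -card_sum_ind expr2.
by congr (_ * (_ - _)); rewrite mulr_sumr; apply: eq_bigr => i _; ring.
Qed.

Let edge_term_ge0 u e : e \in E ->
  0 <= hweight e * ((\sum_i ind i e) * (\sum_i ind i e * u 0 i ^+ 2)
                    - (\sum_i ind i e * u 0 i) ^+ 2).
Proof.
move=> eE; rewrite mulr_ge0 ?(ltW (hweight_gt0 eE)) // subr_ge0.
exact: weighted_cauchy_schwarz.
Qed.

Lemma hlaplacian_psd u : 0 <= dot (u *m L) u.
Proof. by rewrite hlaplacian_quadE; apply: sumr_ge0 => e; apply: edge_term_ge0. Qed.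

Lemma hlaplacian_ker_const u : hconnected E -> u *m L = 0 ->
  forall i j, u 0 i = u 0 j.
Proof.
move=> connE uL0.
have : dot (u *m L) u = 0 by rewrite uL0 dot0l.
rewrite hlaplacian_quadE => /psumr_eq0P quad0.
have adj_eq i j : hadj E i j -> u 0 i = u 0 j.
  move=> /andP [_ /existsP [e /andP [eE /andP [ie je]]]].
  move/eqP: (quad0 (edge_term_ge0 u) e eE).
  rewrite mulf_eq0 (gt_eqF (hweight_gt0 eE)) /= subr_eq0 => /eqP/esym.
  by move/weighted_cauchy_schwarz_eq; apply => //; rewrite /ind ?ie ?je ltr01.
move=> i j.
have closed_u : closed (hadj E) [pred k | u 0 k == u 0 i].
  by move=> x y /adj_eq; rewrite !inE => ->.
by have := closed_connect closed_u (connE i j); rewrite !inE eqxx => /esym/eqP.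
Qed.

Definition hlaplacian_shift c : 'M[R]_n := 1%:M - c *: L.

Lemma hlaplacian_shift_sym c : (hlaplacian_shift c)^T = hlaplacian_shift c.
Proof.
by rewrite /hlaplacian_shift linearB /= linearZ /= tr_scalar_mx hlaplacian_sym.
Qed.

Lemma const1_mul_hlaplacian_shift c :
  const_mx 1 *m hlaplacian_shift c = const_mx 1 :> 'rV[R]_n.
Proof. by rewrite mulmxBr mulmx1 -scalemxAr const1_mul_hlaplacian scaler0 subr0. Qed.

Lemma hlaplacian_shift_nonadj c i j : i != j -> ~~ hadj E i j ->
  hlaplacian_shift c i j = 0.
Proof.
by move=> ij nadj; rewrite 4!mxE hlaplacian_nonadj // (negbTE ij) mulr0 oppr0 addr0.
Qed.

End HypergraphLaplacian.

Lemma size_spectrum (R : realType) n (A : 'M[R]_n) s :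
  is_spectrum A s -> size s = n.
Proof.
by case=> _ charA; have := size_char_poly A; rewrite charA size_prod_XsubC => -[].
Qed.

Lemma mem_spectrum (R : realType) n (A : 'M[R]_n) s r :
  is_spectrum A s -> (r \in s) = eigenvalue A r.
Proof. by case=> _ charA; rewrite eigenvalue_root_char charA root_prod_XsubC. Qed.

Lemma spectrum_annihilates (R : realType) n (A : 'M[R]_n.+1) s :
  is_spectrum A s -> \prod_(r <- s) (A - r%:M) = 0.
Proof.
case=> _ charA; have := Cayley_Hamilton A; rewrite charA rmorph_prod /= => <-.
by apply: eq_bigr => r _; rewrite rmorphB /= horner_mx_X horner_mx_C.
Qed.

Lemma sorted_mem_bounds (R : realDomainType) (s : seq R) r :
  sorted <=%R s -> r \in s -> s`_0 <= r <= s`_(size s).-1.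
Proof.
move=> sorted_s /(nthP 0) [k ks <-].
have le_nth i j : (i < size s)%N -> (j < size s)%N -> (i <= j)%N -> s`_i <= s`_j.
  by move=> ? ?; apply: (sorted_leq_nth le_trans le_refl 0 sorted_s).
have sz_gt0 : (0 < size s)%N by case: (size s) ks.
by apply/andP; split; apply: le_nth; rewrite // ?prednK // -ltnS prednK.
Qed.

Section HypergraphLaplacianSpectrum.
Variables (R : realType) (n : nat) (E : {set {set 'I_n.+1}}) (s : seq R).
Hypotheses (hypE : is_hypergraph E) (specL : is_spectrum (hlaplacian R E) s).

Local Notation L := (hlaplacian R E).
Local Notation one := (const_mx 1 : 'rV[R]_n.+1).
Local Notation lam2 := s`_1.
Local Notation lamn := s`_n.

Lemma hlaplacian_spectrum_head : s = 0 :: behead s.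
Proof.
have [sorted_s _] := specL.
have s_gt0 : (0 < size s)%N by rewrite (size_spectrum specL).
suff <- : s`_0 = 0 by case: s s_gt0.
apply/le_anti/andP; split.
  have : (0 : R) \in s.
    rewrite (mem_spectrum _ specL); apply/eigenvalueP; exists one.
      by rewrite const1_mul_hlaplacian // scale0r.
    by apply/eqP => /matrixP /(_ 0 0); rewrite !mxE => /eqP; rewrite oner_eq0.
  by case/(sorted_mem_bounds sorted_s)/andP.
have /eigenvalueP [v vL v_neq0] : eigenvalue L s`_0.
  by rewrite -(mem_spectrum _ specL) mem_nth.
have := hlaplacian_psd hypE v; rewrite vL dotZl pmulr_lge0 // lt_def dot_ge0 andbT.
by apply: contra v_neq0 => /eqP/dot_eq0 ->.
Qed.

Lemma hlaplacian_perp1_annihilated (y : 'rV[R]_n.+1) :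
  hconnected E -> dot y one = 0 -> y *m \prod_(r <- behead s) (L - r%:M) = 0.
Proof.
move=> connE y_perp1.
have yP0 : y *m \prod_(r <- 0 :: behead s) (L - r%:M) = 0.
  by rewrite -hlaplacian_spectrum_head spectrum_annihilates ?mulmx0.
have [y1 [y2 [def_y y1L y2P y1y2]]] := eigen_split (hlaplacian_sym R hypE) yP0.
rewrite scale0r in y1L.
suff y1_0 : y1 = 0 by rewrite def_y y1_0 add0r.
have y1_const : y1 = y1 0 0 *: one.
  apply/matrixP => i j; rewrite !mxE mulr1 (ord1 i).
  exact: hlaplacian_ker_const y1L j 0.
apply: dot_eq0; have := congr1 (dot y1) def_y.
by rewrite dotDr y1y2 addr0 => <-; rewrite {1}y1_const dotZl dotC y_perp1 mulr0.
Qed.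

Lemma hlaplacian_behead_bounds r : r \in behead s -> lam2 <= r <= lamn.
Proof.
move=> r_in; have [sorted_s _] := specL.
have size_s' : size (behead s) = n by rewrite size_behead (size_spectrum specL).
have sorted_s' : sorted <=%R (behead s) by case: (s) sorted_s => //= ? ? /path_sorted.
have := sorted_mem_bounds sorted_s' r_in; rewrite !nth_behead size_s'.
by case: (n) size_s' => [|?] //; case: (behead s) r_in.
Qed.

Lemma hlaplacian_spectrum_bounds : (0 < n)%N -> 0 <= lam2 <= lamn.
Proof.
move=> n_gt0.
have lam2_in : lam2 \in behead s.
  by rewrite -nth_behead mem_nth // size_behead (size_spectrum specL).
have [sorted_s _] := specL.
have /andP [+ _] := sorted_mem_bounds sorted_s (mem_behead lam2_in).
rewrite {1}hlaplacian_spectrum_head /= => ->.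
by case/andP: (hlaplacian_behead_bounds lam2_in).
Qed.

Lemma hlaplacian_contraction : hconnected E -> 0 < lam2 ->
  forall y : 'rV[R]_n.+1, dot y one = 0 ->
  let M := hlaplacian_shift E (2 / (lamn + lam2)) in
  dot (y *m M) (y *m M) <= (1 - 2 * lam2 / (lamn + lam2)) ^+ 2 * dot y y.
Proof.
move=> connE lam2_gt0 y y_perp1 /=.
set c := 2 / (lamn + lam2); set mu := 1 - 2 * lam2 / (lamn + lam2).
set M := hlaplacian_shift E c.
have symM : M^T = M := hlaplacian_shift_sym hypE c.
have eigM r (u : 'rV_n.+1) : u *m L = r *: u -> u *m M = (1 - c * r) *: u.
  by move=> uL; rewrite mulmxBr mulmx1 -scalemxAr uL scalerA scalerBl scale1r.
pose G := (mu ^+ 2)%:M - M *m M.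
have symG : G^T = G by rewrite linearB /= tr_scalar_mx trmx_mul symM.
have eigG r (u : 'rV_n.+1) : u *m L = r *: u ->
    u *m G = (mu ^+ 2 - (1 - c * r) ^+ 2) *: u.
  move=> /eigM uM; rewrite mulmxBr mul_mx_scalar mulmxA uM -scalemxAl uM.
  by rewrite scalerA scalerBl -expr2.
have g_ge0 : {in behead s, forall r, 0 <= mu ^+ 2 - (1 - c * r) ^+ 2}.
  move=> r /hlaplacian_behead_bounds /andP [lam2_r r_lamn].
  have -> : mu ^+ 2 - (1 - c * r) ^+ 2 =
      4 * (r - lam2) * (lamn - r) / (lamn + lam2) ^+ 2.
    by rewrite /mu /c; field; apply/lt0r_neq0; lra.
  by rewrite !mulr_ge0 ?invr_ge0 ?sqr_ge0 ?subr_ge0.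
have := quad_ge0_of_annihilated (hlaplacian_sym R hypE) symG eigG g_ge0
  (hlaplacian_perp1_annihilated connE y_perp1).
by rewrite mulmxBr mul_mx_scalar dotBl dotZl mulmxA dot_mulmx_sym // subr_ge0.
Qed.

End HypergraphLaplacianSpectrum.

Section VertexExpansion.
Variables (R : realFieldType) (n : nat) (E : {set {set 'I_n}}) (M : 'M[R]_n).
Variable mu : R.
Hypotheses (n_gt0 : (0 < n)%N) (symM : M^T = M).
Hypothesis M1 : const_mx 1 *m M = const_mx 1 :> 'rV[R]_n.
Hypothesis M_nonadj : forall i j, i != j -> ~~ hadj E i j -> M i j = 0.
Hypothesis M_contr : forall y : 'rV[R]_n, dot y (const_mx 1) = 0 ->
  dot (y *m M) (y *m M) <= mu ^+ 2 * dot y y.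

Local Notation one := (const_mx 1 : 'rV[R]_n).
Variable S : {set 'I_n}.
Local Notation x := (\row_j ind j S : 'rV[R]_n).
Local Notation k := (#|S|%:R : R).

Lemma dot_mulmx_const1 (u : 'rV[R]_n) : dot (u *m M) one = dot u one.
Proof. by rewrite dot_mulmx_sym // M1. Qed.

Lemma dot_indicator_const1 : dot x one = k.
Proof. by rewrite dotE card_sum_ind; apply: eq_bigr => j _; rewrite !mxE mulr1. Qed.

Lemma indicator_mul_support j : j \notin S :|: vboundary E S -> (x *m M) 0 j = 0.
Proof.
rewrite !inE negb_or => /andP [jS]; rewrite jS /= => /existsPn nadj.
rewrite mxE; apply: big1 => i _; rewrite mxE /ind.
case iS : (i \in S); last by rewrite mul0r.
have ij : i != j by apply: contraNneq jS => <-.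
by have := nadj i; rewrite iS /= => /(M_nonadj ij) ->; rewrite mulr0.
Qed.

Lemma norm_indicator_mul :
  dot (x *m M) (x *m M) <= k ^+ 2 / n%:R + mu ^+ 2 * (k - k ^+ 2 / n%:R).
Proof.
have n_neq0 : n%:R != 0 :> R by rewrite pnatr_eq0 -lt0n.
have x1 := dot_indicator_const1.
have xx : dot x x = k.
  rewrite dotE card_sum_ind; apply: eq_bigr => j _; rewrite !mxE /ind.
  by case: (j \in S); rewrite ?mulr1 ?mulr0.
have oneone : dot one one = n%:R.
  rewrite dotE (eq_bigr (fun _ => 1)) => [|j _]; last by rewrite !mxE mulr1.
  by rewrite sumr_const card_ord.
set y := x - (k / n%:R) *: one.
have y1 : dot y one = 0 by rewrite dotBl dotZl x1 oneone divfK // subrr.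
have yy : dot y y = k - k ^+ 2 / n%:R.
  by rewrite !(dotBl, dotBr, dotZl, dotZr) xx x1 oneone (dotC one x) x1; field.
have -> : x *m M = (k / n%:R) *: one + y *m M.
  by rewrite mulmxBl -scalemxAl M1 addrC subrK.
have -> : dot ((k / n%:R) *: one + y *m M) ((k / n%:R) *: one + y *m M) =
    k ^+ 2 / n%:R + dot (y *m M) (y *m M).
  rewrite !(dotDl, dotDr, dotZl, dotZr) oneone (dotC one) dot_mulmx_const1 y1.
  by field.
by rewrite lerD2l -yy M_contr.
Qed.

Lemma vertex_expansion_bound :
  k ^+ 2 <= (k + #|vboundary E S|%:R) * (k ^+ 2 / n%:R + mu ^+ 2 * (k - k ^+ 2 / n%:R)).
Proof.
have sum_xM : dot (x *m M) one = k by rewrite dot_mulmx_const1 dot_indicator_const1.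
have cardN : #|S :|: vboundary E S|%:R = k + #|vboundary E S|%:R :> R.
  rewrite cardsU (_ : S :&: _ = set0) ?cards0 ?subn0 ?natrD //.
  by apply/setP => j; rewrite !inE; case: (j \in S).
rewrite -{1}sum_xM -cardN; apply: le_trans (sqr_dot_const1_le indicator_mul_support) _.
by rewrite ler_wpM2l ?ler0n ?norm_indicator_mul.
Qed.

End VertexExpansion.

Section ExpansionAlgebra.
Variable R : realFieldType.
Implicit Types a b k d p q : R.

Lemma expansion_ratio_bound k d p q : 0 < k -> 0 <= p -> 0 <= q ->
  k ^+ 2 <= (k + d) * (k ^+ 2 / (k + p) + q * (k - k ^+ 2 / (k + p))) ->
  p * (1 - q) / (q * p + k) <= d / k.
Proof.
move=> k_gt0 p_ge0 q_ge0.
have kp_gt0 : 0 < k + p by lra.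
have qpk_gt0 : 0 < q * p + k by rewrite ltr_wpDl ?mulr_ge0.
have -> : k ^+ 2 / (k + p) + q * (k - k ^+ 2 / (k + p)) = k * (k + q * p) / (k + p).
  by field; rewrite gt_eqF.
rewrite mulrA ler_pdivlMr // mulrCA expr2 -[k * k * _]mulrA ler_pM2l // => bound.
rewrite -subr_ge0.
have -> : d / k - p * (1 - q) / (q * p + k) =
    (d * (q * p + k) - k * p * (1 - q)) / (k * (q * p + k)).
  by field; rewrite !gt_eqF.
apply: divr_ge0; last by rewrite mulr_ge0 ?ltW.
by rewrite subr_ge0; nra.
Qed.

Lemma expansion_ratio_half k p q : 0 < k <= p -> 0 <= q <= 1 ->
  (1 - q) / (1 + q) <= p * (1 - q) / (q * p + k).
Proof.
move=> /andP [k_gt0 k_le_p] /andP [q_ge0 q_le1].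
have qpk_gt0 : 0 < q * p + k by rewrite ltr_wpDl ?mulr_ge0 //; lra.
rewrite -subr_ge0.
have -> : p * (1 - q) / (q * p + k) - (1 - q) / (1 + q) =
    (1 - q) * (p - k) / ((1 + q) * (q * p + k)).
  by field; rewrite !gt_eqF //; lra.
by apply: divr_ge0; apply: mulr_ge0; lra.
Qed.

Lemma contraction_factor_bounds a b : 0 < a <= b ->
  0 <= (1 - 2 * a / (b + a)) ^+ 2 <= 1.
Proof.
move=> /andP [a_gt0 a_le_b].
have -> : 1 - 2 * a / (b + a) = (b - a) / (b + a) by field; rewrite gt_eqF //; lra.
rewrite sqr_ge0 exprn_ile1 ?divr_ge0 ?ler_pdivrMr //; lra.
Qed.

Lemma contraction_ratio a b : 0 < a <= b ->
  let q := (1 - 2 * a / (b + a)) ^+ 2 in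
  (1 - q) / (1 + q) = 2 * b * a / (b ^+ 2 + a ^+ 2).
Proof.
move=> /andP [a_gt0 a_le_b] /=.
by field; apply/andP; split; rewrite gt_eqF //; nra.
Qed.

End ExpansionAlgebra.

Theorem corollary4 (R : realType) (n : nat) (E : {set {set 'I_n}})
  (s : seq R) :
  is_hypergraph E ->
  hconnected E ->
  (exists i j : 'I_n, (i != j) && ~~ hadj E i j) ->
  is_spectrum (hlaplacian R E) s ->
  let lam2 := s`_1 in
  let lamn := s`_(n.-1) in
  let lam := 2 * lam2 / (lamn + lam2) in
  forall S : {set 'I_n}, S != set0 ->
    (#|vboundary E S|%:R / #|S|%:R : R)
      >= (n - #|S|)%:R * (1 - (1 - lam) ^+ 2)
         / ((1 - lam) ^+ 2 * (n - #|S|)%:R + #|S|%:R)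
    /\ ((2 * #|S| <= n)%N ->
        (#|vboundary E S|%:R / #|S|%:R : R)
          >= 2 * lamn * lam2 / (lamn ^+ 2 + lam2 ^+ 2)).
Proof.
case: n E s => [|n] E s hypE connE [i [j /andP [ij _]]] specL lam2 lamn lam S S_neq0.
  by case: i ij.
have n_gt0 : (0 < n)%N by have := max_card [set i; j]; rewrite cards2 ij card_ord.
have k_gt0 : 0 < #|S|%:R :> R by rewrite ltr0n card_gt0.
have S_le_n : (#|S| <= n.+1)%N by rewrite -[X in (_ <= X)%N]card_ord max_card.
have p_ge0 : 0 <= (n.+1 - #|S|)%:R :> R := ler0n _ _.
have /andP [+ lam2_le_lamn] := hlaplacian_spectrum_bounds hypE specL n_gt0.
(* Connectivity forces lam2 > 0, but the case lam2 = 0 is trivial anyway. *)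
rewrite le_eqVlt => /orP [/eqP lam2_0 | lam2_gt0].
  rewrite /lam /lamn /lam2 -lam2_0 !(mulr0, mul0r) subr0 expr1n subrr mulr0 mul0r.
  by split=> [|_]; rewrite divr_ge0 ?ler0n.
have := vertex_expansion_bound (ltn0Sn n) (hlaplacian_shift_sym hypE _)
  (const1_mul_hlaplacian_shift hypE _) (@hlaplacian_shift_nonadj _ _ _ _)
  (hlaplacian_contraction hypE specL connE lam2_gt0) S.
have -> : n.+1%:R = #|S|%:R + (n.+1 - #|S|)%:R :> R by rewrite -natrD subnKC.
move/expansion_ratio_bound => /(_ k_gt0 p_ge0 (sqr_ge0 _)) ratio.
split=> // half; apply: le_trans ratio.
have lam2_bounds : 0 < lam2 <= lamn by rewrite lam2_gt0.
rewrite -(contraction_ratio lam2_bounds) expansion_ratio_half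
  ?contraction_factor_bounds //.
by rewrite k_gt0 ler_nat leq_subRL // addnn -mul2n.
Qed.
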